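(* Let $f(x,\theta)$ be a model, differentiable in its parameters $\theta\in\mathbb{R}^d$, let $\mathcal{L}(\hat y,y)$ be a loss function, and let $\kappa>0$. Let $\operatorname{Clip}_\kappa:\mathbb{R}^d\to\mathbb{R}^d$ clamp each entry of its input to $[-\kappa,\kappa]$ (leaving entries in that range unchanged). Let $\boldsymbol{\theta^{(t-1)}}=[\theta^L,\theta^U]\subseteq\mathbb{R}^d$ be an interval parameter domain, let $\mathcal{B}^{(t)}=\{(x^{(i)},y^{(i)})\}_{i=1}^b$ be a nominal batch of size $b$, and let $n$ be an integer with $0\le n\le b$. For each $i$, let $\delta_L^{(t,i)},\delta_U^{(t,i)}\in\mathbb{R}^d$ satisfy, element-wise, $$\delta_L^{(t,i)}\le \operatorname{Clip}_\kappa\Big[\nabla_\theta\mathcal{L}\big(f(x^{(i)},\theta'),y^{(i)}\big)\Big]\le\delta_U^{(t,i)}\quad\text{for all }\theta'\in\boldsymbol{\theta^{(t-1)}}.$$ Then for every $\theta^{(t-1)}\in\boldsymbol{\theta^{(t-1)}}$ and every perturbed batch $\tilde{\mathcal{B}}^{(t)}$ obtained from $\mathcal{B}^{(t)}$ by removing up to $n$ data points and adding up to $n$ arbitrary data points, the clipped descent direction $$\Delta\theta^{(t)}=\frac{1}{|\tilde{\mathcal{B}}^{(t)}|}\sum_{(x,y)\in\tilde{\mathcal{B}}^{(t)}}\operatorname{Clip}_\kappa\Big[\nabla_\theta\mathcal{L}\big(f(x,\theta^{(t-1)}),y\big)\Big]$$ satisfies, element-wise, $\Delta\theta_L^{(t)}\le\Delta\theta^{(t)}\le\Delta\theta_U^{(t)}$,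 where $$\Delta\theta_L^{(t)}=\frac1b\Big(\operatorname{SEMin}_{b-n}\{\delta_L^{(t,i)}\}_{i=1}^b-n\kappa\mathbf{1}\Big),\qquad \Delta\theta_U^{(t)}=\frac1b\Big(\operatorname{SEMax}_{b-n}\{\delta_U^{(t,i)}\}_{i=1}^b+n\kappa\mathbf{1}\Big),$$ and $\mathbf 1\in\mathbb{R}^d$ is the all-ones vector.
   Context: An interval domain $[\theta^L,\theta^U]\subseteq\mathbb{R}^d$ is the set of $\theta$ with $\theta^L_j\le\theta_j\le\theta^U_j$ for all $j$. For vectors $\{v^{(i)}\}_{i=1}^b\subseteq\mathbb{R}^d$ and an integer $a\le b$, $\operatorname{SEMax}_a\{v^{(i)}\}$ is the vector whose $j$-th entry is the sum of the $a$ largest values among $v^{(1)}_j,\dots,v^{(b)}_j$, and $\operatorname{SEMin}_a\{v^{(i)}\}$ is the vector whose $j$-th entry is the sum of the $a$ smallest values among them (computed independently at each index $j$). *)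

From HB Require Import structures.
From mathcomp Require Import all_boot all_order all_algebra.
From mathcomp Require Import all_classical all_reals all_analysis.
Set Implicit Arguments. Unset Strict Implicit. Unset Printing Implicit Defensive.
Import Order.TTheory GRing.Theory Num.Theory.
Import numFieldNormedType.Exports.
Local Open Scope ring_scope.

Definition grad (R : realType) (d : nat) (h : 'rV[R]_d -> R) (th : 'rV[R]_d)
  : 'rV[R]_d := \row_j ('D_(delta_mx 0 j) h th).

Definition Clip (R : realType) (d : nat) (kappa : R) (v : 'rV[R]_d) : 'rV[R]_d :=
  \row_j Num.max (- kappa) (Num.min (v 0 j) kappa).

Definition in_box (R : realType) (d : nat) (thL thU th : 'rV[R]_d) : Prop :=
  forall j, thL 0 j <= th 0 j <= thU 0 j.

Definition sum_largest (R : realType) (a : nat) (s : seq R) : R :=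
  \sum_(x <- take a (sort (fun x y => y <= x) s)) x.
Definition sum_smallest (R : realType) (a : nat) (s : seq R) : R :=
  \sum_(x <- take a (sort (fun x y => x <= y) s)) x.

Definition SEMax (R : realType) (d b : nat) (a : nat) (v : 'I_b -> 'rV[R]_d)
  : 'rV[R]_d := \row_j sum_largest a [seq v i 0 j | i <- enum 'I_b].
Definition SEMin (R : realType) (d b : nat) (a : nat) (v : 'I_b -> 'rV[R]_d)
  : 'rV[R]_d := \row_j sum_smallest a [seq v i 0 j | i <- enum 'I_b].

Definition ones (R : realType) (d : nat) : 'rV[R]_d := const_mx 1.

(* Fix a coordinate and let m >= b - n nominal points be kept and a <= n points
   be added; let sigma be the mean of the kept clipped gradients.  All clipped
   gradients are at most kappa, so the perturbed mean is at most the weighted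
   mean of sigma (weight m) and kappa (weight a).  Moving weight from sigma to
   the larger value kappa only raises it, up to the weighted mean of sigma
   (weight b - n) and kappa (weight n).  Finally (b - n) sigma is at most the
   sum of the b - n largest upper bounds, because the mean of the m kept upper
   bounds is at most the mean of the b - n largest ones.  The lower bound is
   the upper bound for the negated quantities. *)

From HB Require Import structures.
From mathcomp Require Import all_boot all_order all_algebra.
From mathcomp Require Import all_classical all_reals all_analysis.
From mathcomp Require Import lra zify.
Set Implicit Arguments. Unset Strict Implicit. Unset Printing Implicit Defensive.
Import Order.TTheory GRing.Theory Num.Theory.
Import numFieldNormedType.Exports.
Local Open Scope ring_scope.

Lemma prefix_mean_nonincreasing (R : realFieldType) (tau : nat -> R) (k m : nat) :
  {in gtn m &, forall i j, (i <= j)%N -> tau j <= tau i} -> (k <= m)%N ->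
  k%:R * \sum_(0 <= j < m) tau j <= m%:R * \sum_(0 <= j < k) tau j.
Proof.
move=> tau_noninc km.
rewrite (@big_cat_nat _ _ _ k) //= -{2}(subnK km) natrD mulrDl mulrDr addrC lerD2r.
have -> : k%:R * \sum_(k <= j < m) tau j = \sum_(0 <= i < k) \sum_(k <= j < m) tau j.
  by rewrite sumr_const_nat subn0 mulr_natl.
rewrite mulr_sumr !big_nat; apply: ler_sum => i /andP[_ ik].
rewrite mulr_natl -sumr_const_nat big_nat; apply: ler_sum => j /andP[kj jm].
by apply: tau_noninc; rewrite ?inE; lia.
Qed.

Lemma nth_sort_ge (R : realDomainType) (s : seq R) (i j : nat) :
  (i <= j < size s)%N ->
  nth 0 (sort (fun x y => y <= x) s) j <= nth 0 (sort (fun x y => y <= x) s) i.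
Proof.
move=> /andP[ij js].
have ge_sorted : sorted (fun x y : R => y <= x) (sort (fun x y => y <= x) s).
  by apply: sort_sorted => x y; rewrite orbC le_total.
apply: (sorted_leq_nth _ _ _ ge_sorted) => //.
- by move=> y x z /= xy zy; apply: le_trans zy xy.
- by rewrite inE size_sort; apply: leq_ltn_trans js.
- by rewrite inE size_sort.
Qed.

Lemma sum_largest_nth (R : realType) (k : nat) (s : seq R) : (k <= size s)%N ->
  sum_largest k s = \sum_(0 <= j < k) nth 0 (sort (fun x y => y <= x) s) j.
Proof.
move=> ks; rewrite /sum_largest (big_nth 0) size_takel ?size_sort //.
by rewrite !big_nat; apply: eq_bigr => j /andP[_ jk]; rewrite nth_take.
Qed.

Lemma sum_largest_mean_le (R : realType) (k m : nat) (s : seq R) :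
  (k <= m <= size s)%N -> k%:R * (sum_largest m s / m%:R) <= sum_largest k s.
Proof.
move=> /andP[km ms]; have [m0|m_gt0] := posnP m.
  have -> : k = 0%N by lia.
  by rewrite /sum_largest take0 big_nil mul0r.
rewrite mulrA ler_pdivrMr ?ltr0n // [X in _ <= X]mulrC.
rewrite !sum_largest_nth ?(leq_trans km) //.
apply: prefix_mean_nonincreasing => // i j; rewrite !inE => im jm ij.
by apply: nth_sort_ge; rewrite ij (leq_trans jm).
Qed.

Lemma sum_le_sum_largest (R : realType) (I : finType) (u : I -> R) (A : {set I}) :
  \sum_(i in A) u i <= sum_largest #|A| [seq u i | i <- enum I].
Proof.
set m := #|A|; set t := sort (fun x y => y <= x) [seq u i | i <- enum I].
have size_t : size t = #|I| by rewrite size_sort size_map -cardT.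
have m_le : (m <= #|I|)%N by apply: max_card.
(* With [c] the m-th largest value, [u <= (u - c)^+ + c], and the positive parts
   [(u - c)^+] vanish outside the m largest values. *)
set c := nth 0 t m.-1.
pose pos (x : R) := Num.max x 0.
have t_ge_c j : (j < m)%N -> c <= nth 0 t j.
  by move=> jm; apply: nth_sort_ge; rewrite size_map -cardT -subn1; lia.
have t_le_c j : (m <= j < #|I|)%N -> nth 0 t j <= c.
  by move=> jm; apply: nth_sort_ge; rewrite size_map -cardT -subn1; lia.
have over_c : \sum_(x <- t) pos (x - c) = \sum_(0 <= j < m) (nth 0 t j - c).
  rewrite (big_nth 0) size_t (@big_cat_nat _ _ _ m) //=.
  rewrite [X in _ + X]big_nat [X in _ + X]big1 ?addr0 => [|j /t_le_c tj_le]; last first.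
    by apply/max_idPr; rewrite subr_le0.
  rewrite !big_nat; apply: eq_bigr => j /andP[_ /t_ge_c tj_ge].
  by apply/max_idPl; rewrite subr_ge0.
have sum_pos_perm : \sum_i pos (u i - c) = \sum_(x <- t) pos (x - c).
  by rewrite (perm_big _ (permEl (perm_sort _ _))) big_map big_enum.
rewrite sum_largest_nth; last by rewrite size_map -cardT.
have -> : \sum_(0 <= j < m) nth 0 t j = \sum_i pos (u i - c) + c *+ m.
  by rewrite sum_pos_perm over_c sumrB sumr_const_nat subn0 subrK.
apply: le_trans (_ : \sum_(i in A) (pos (u i - c) + c) <= _).
  by apply: ler_sum => i _; rewrite -lerBlDr le_max lexx.
rewrite big_split /= sumr_const -/m lerD2r [X in _ <= X](bigID (mem A)) /= lerDl.
by apply: sumr_ge0 => i _; rewrite le_max lexx orbT.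
Qed.

Lemma mean_le_sum_largest (R : realType) (I : finType) (u g : I -> R)
    (A : {set I}) (k : nat) :
  (k <= #|A|)%N -> {in A, forall i, g i <= u i} ->
  k%:R * ((\sum_(i in A) g i) / #|A|%:R) <= sum_largest k [seq u i | i <- enum I].
Proof.
move=> kA g_le_u.
have kA_size : (k <= #|A| <= size [seq u i | i <- enum I])%N.
  by rewrite kA size_map -cardT max_card.
apply: le_trans _ (sum_largest_mean_le kA_size).
apply: ler_wpM2l => //; apply: ler_wpM2r; first by rewrite invr_ge0.
by apply: le_trans _ (sum_le_sum_largest u A); apply: ler_sum.
Qed.

Lemma le_mix_mean (R : realFieldType) (s K x x' y y' : R) :
  s <= K -> 0 <= x <= x' -> 0 <= y' <= y -> 0 < x + y -> 0 < x' + y' ->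
  (y * s + x * K) / (x + y) <= (y' * s + x' * K) / (x' + y').
Proof.
move=> sK /andP[x_ge0 xx'] /andP[y'_ge0 y'y] xy_gt0 xy'_gt0.
rewrite ler_pdivrMr // mulrAC ler_pdivlMr //.
have : 0 <= (x' * y - x * y') * (K - s) by apply: mulr_ge0; nra.
nra.
Qed.

Lemma mean_le_trimmed_sum (R : realType) (I : finType) (n : nat) (K : R)
    (u g : I -> R) (kept : {set I}) (h : seq R) :
  0 <= K -> (n <= #|I|)%N -> (#|~: kept| <= n)%N -> (size h <= n)%N ->
  {in kept, forall i, g i <= u i} -> {in kept, forall i, g i <= K} ->
  {in h, forall x, x <= K} ->
  (#|kept| + size h)%:R^-1 * (\sum_(i in kept) g i + \sum_(x <- h) x)
  <= #|I|%:R^-1 * (sum_largest (#|I| - n) [seq u i | i <- enum I] + n%:R * K).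
Proof.
move=> K_ge0 nI removed_le added_le g_le_u g_le_K h_le_K.
set m := #|kept|; set a := size h; set k := (#|I| - n)%N.
set S := \sum_(i in kept) g i; set H := \sum_(x <- h) x.
set T := sum_largest k _.
have card_kept : (m + #|~: kept|)%N = #|I| by apply: cardsC.
have km : (k <= m)%N by lia.
have H_le : H <= a%:R * K.
  rewrite /H big_seq (le_trans (ler_sum _ h_le_K)) //.
  by rewrite -big_seq big_const_seq count_predT iter_addr_0 mulr_natl.
have S_le : S <= m%:R * K.
  by rewrite /S mulr_natl -sumr_const; apply: ler_sum.
have [ma0|ma_gt0] := posnP (m + a).
  have k0 : k = 0%N by lia.
  rewrite ma0 invr0 mul0r /T k0 /sum_largest take0 big_nil add0r.
  by rewrite mulr_ge0 ?invr_ge0 ?mulr_ge0.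
(* If nothing is kept, [sigma] is the junk value [S / 0 = 0]. *)
set sigma := S / m%:R.
have [S_eq sigma_le] : S = m%:R * sigma /\ sigma <= K.
  have [m0|m_gt0] := posnP m.
    by rewrite /sigma /S m0 invr0 mulr0 mul0r (cards0_eq m0) big_set0.
  by rewrite /sigma mulrC divfK ?pnatr_eq0 -?lt0n // ler_pdivrMr ?ltr0n // mulrC.
have sigma_T : k%:R * sigma <= T by apply: mean_le_sum_largest.
have -> : #|I| = (k + n)%N by rewrite subnK.
rewrite !natrD !(mulrC _^-1) [m%:R + _]addrC [k%:R + _]addrC.
apply: le_trans (_ : (m%:R * sigma + a%:R * K) / (a%:R + m%:R) <= _).
  by rewrite ler_pM2r ?invr_gt0 -?natrD ?ltr0n 1?addnC // -S_eq lerD2l.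
apply: le_trans (_ : (k%:R * sigma + n%:R * K) / (n%:R + k%:R) <= _).
  by apply: (@le_mix_mean R); rewrite ?ler0n ?ler_nat -?natrD ?ltr0n //; lia.
by rewrite ler_pM2r ?invr_gt0 -?natrD ?ltr0n 1?addnC ?subnK ?lerD2r //; lia.
Qed.

Lemma sum_smallest_opp (R : realType) (a : nat) (s : seq R) :
  sum_smallest a s = - sum_largest a [seq - x | x <- s].
Proof.
rewrite /sum_largest sort_map -map_take big_map sumrN opprK.
congr (\sum_(x <- take a (sort _ s)) x).
by apply/funext => x; apply/funext => y; rewrite /relpre /= lerN2.
Qed.

Lemma trimmed_sum_le_mean (R : realType) (I : finType) (n : nat) (K : R)
    (l g : I -> R) (kept : {set I}) (h : seq R) :
  0 <= K -> (n <= #|I|)%N -> (#|~: kept| <= n)%N -> (size h <= n)%N ->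
  {in kept, forall i, l i <= g i} -> {in kept, forall i, - K <= g i} ->
  {in h, forall x, - K <= x} ->
  #|I|%:R^-1 * (sum_smallest (#|I| - n) [seq l i | i <- enum I] - n%:R * K)
  <= (#|kept| + size h)%:R^-1 * (\sum_(i in kept) g i + \sum_(x <- h) x).
Proof.
move=> K_ge0 nI removed_le added_le l_le_g g_ge_K h_ge_K.
have added_le' : (size [seq - x | x <- h] <= n)%N by rewrite size_map.
have Nl_ge_Ng : {in kept, forall i, - g i <= - l i}.
  by move=> i /l_le_g; rewrite lerN2.
have Ng_le_K : {in kept, forall i, - g i <= K}.
  by move=> i /g_ge_K; rewrite lerNl.
have Nh_le_K : {in [seq - x | x <- h], forall x, x <= K}.
  by move=> _ /mapP[x /h_ge_K x_ge ->]; rewrite lerNl.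
have := mean_le_trimmed_sum K_ge0 nI removed_le added_le' Nl_ge_Ng Ng_le_K Nh_le_K.
have -> : [seq - l i | i <- enum I] = [seq - x | x <- [seq l i | i <- enum I]].
  exact: map_comp.
rewrite size_map big_map !sumrN -[sum_largest _ _]opprK -sum_smallest_opp.
by rewrite -opprD [- _ + _]addrC -opprB !mulrN lerN2.
Qed.

Lemma Clip_bounded (R : realType) (d : nat) (kappa : R) (v : 'rV[R]_d) (j : 'I_d) :
  0 <= kappa -> - kappa <= Clip kappa v 0 j <= kappa.
Proof.
move=> kappa_ge0; rewrite /Clip mxE le_max lexx /= ge_max ge_min lexx orbT andbT.
lra.
Qed.

Theorem mainTheorem2 (R : realType) (d b n : nat)
  (X Y : Type) (Yhat : normedModType R)
  (f : X -> 'rV[R]_d -> Yhat) (L : Yhat -> Y -> R) (kappa : R)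
  (thL thU : 'rV[R]_d) (xs : 'I_b -> X) (ys : 'I_b -> Y)
  (dL dU : 'I_b -> 'rV[R]_d) :
  (forall x th, differentiable (f x) th) ->
  0 < kappa ->
  (n <= b)%N ->
  (forall i th', in_box thL thU th' -> forall j,
      dL i 0 j <= Clip kappa (grad (fun th => L (f (xs i) th) (ys i)) th') 0 j
      <= dU i 0 j) ->
  forall th : 'rV[R]_d, in_box thL thU th ->
  forall (kept : {set 'I_b}) (added : seq (X * Y)),
    (#|~: kept| <= n)%N -> (size added <= n)%N ->
    let Delta :=
      (#|kept| + size added)%:R^-1 *:
        (\sum_(i in kept) Clip kappa (grad (fun th' => L (f (xs i) th') (ys i)) th)
         + \sum_(p <- added) Clip kappa (grad (fun th' => L (f p.1 th') p.2) th)) in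
    forall j,
      (b%:R^-1 *: (SEMin (b - n) dL - (n%:R * kappa) *: ones R d)) 0 j <= Delta 0 j
      <= (b%:R^-1 *: (SEMax (b - n) dU + (n%:R * kappa) *: ones R d)) 0 j.
Proof.
move=> _ kappa_gt0 nb dLU th th_box kept added removed_le added_le Delta j.
have kappa_ge0 := ltW kappa_gt0.
set g := fun i => Clip kappa (grad (fun th' => L (f (xs i) th') (ys i)) th) 0 j.
set hv := [seq Clip kappa (grad (fun th' => L (f p.1 th') p.2) th) 0 j | p <- added].
have -> : Delta 0 j
    = (#|kept| + size hv)%:R^-1 * (\sum_(i in kept) g i + \sum_(x <- hv) x).
  by rewrite /Delta !mxE !summxE big_map size_map.
have hv_le : (size hv <= n)%N by rewrite size_map.
have hv_clip : {in hv, forall x, - kappa <= x <= kappa}.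
  apply/allP; rewrite all_map; apply: sub_all (all_predT added) => p _ /=.
  exact: Clip_bounded.
have g_clip i : - kappa <= g i <= kappa by apply: Clip_bounded.
rewrite !mxE !mulr1; apply/andP; split.
- have := @trimmed_sum_le_mean R 'I_b n kappa (fun i => dL i 0 j) g kept hv.
  rewrite card_ord; apply=> // [i _|i _|x /hv_clip /andP[]//].
    by case/andP: (dLU i th th_box j).
  by case/andP: (g_clip i).
- have := @mean_le_trimmed_sum R 'I_b n kappa (fun i => dU i 0 j) g kept hv.
  rewrite card_ord; apply=> // [i _|i _|x /hv_clip /andP[]//].
    by case/andP: (dLU i th th_box j).
  by case/andP: (g_clip i).
Qed.
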